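(* Every bijective (injective) sequence in a group has a proper subsequence.
   Context: Groups are written additively and are not assumed commutative. For a sequence $a_1,a_2,\dotsc$ and a finite nonempty index set $F=\{i_1<\dotsb<i_m\}\subseteq\mathbb N$, let $a_F:=a_{i_1}+\dotsb+a_{i_m}$. For finite index sets $F_1,F_2$, write $F_1<F_2$ if every element of $F_1$ is smaller than every element of $F_2$. A sequence $a_1,a_2,\dotsc$ is proper if $a_{F_1}\ne a_{F_2}$ for all nonempty finite index sets $F_1<F_2$. *)

From HB Require Import structures.
From mathcomp Require Import all_boot.
From mathcomp Require Import monoid.
Set Implicit Arguments. Unset Strict Implicit. Unset Printing Implicit Defensive.

(* Groups: MathComp's (possibly infinite, non-commutative) [groupType] from
   boot/monoid.v.  The paper writes the group law additively; here it is
   written [*] (notation only).  Sequences a_1, a_2, ... are functions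
   [nat -> G] (indexed from 0). *)

Local Open Scope group_scope.

(* A finite nonempty index set F = {i_1 < ... < i_m} is represented by the
   strictly increasing nonempty list [:: i_1; ...; i_m]. *)
Definition index_set (F : seq nat) : bool := (F != [::]) && sorted ltn F.

Definition seq_sum (G : groupType) (a : nat -> G) (F : seq nat) : G :=
  foldr (fun i acc => a i * acc) 1 F.

Definition idx_lt (F1 F2 : seq nat) : bool :=
  all (fun i => all (fun j => i < j) F2) F1.

Definition proper_seq (G : groupType) (a : nat -> G) : Prop :=
  forall F1 F2 : seq nat, index_set F1 -> index_set F2 -> idx_lt F1 F2 ->
    seq_sum a F1 <> seq_sum a F2.

From HB Require Import structures.
From mathcomp Require Import all_boot.
From mathcomp Require Import monoid.

(* The subsequence a (phi 0), a (phi 1), ... is built greedily.  Having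
   chosen the indices s = [:: phi 0; ...; phi (n-1)], the elements
   (a_F)^-1 * a_F' with F, F' ranging over the subsequences of s form a
   finite set (the "quotients" of s); since a is injective, some index k
   beyond phi (n-1) has a k outside of it, and we let phi n be such a k.
   This choice makes the subsequence b = a o phi proper: if b_F1 = b_F2
   with F1 < F2 and x the last element of F2 = F2' ++ [:: x], then
   b x = (b_F2')^-1 * b_F1, a quotient of subsequences of indices < x. *)

Set Implicit Arguments. Unset Strict Implicit. Unset Printing Implicit Defensive.
Local Open Scope group_scope.

Section Subsequences.
Variable T : eqType.

Fixpoint subseqs (s : seq T) : seq (seq T) :=
  if s is x :: s' then [seq x :: t | t <- subseqs s'] ++ subseqs s'
  else [:: [::]].

Lemma mem_subseqs s t : (t \in subseqs s) = subseq t s.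
Proof.
elim: s t => [|x s IH] [|y t] //=; rewrite mem_cat IH ?sub0seq ?orbT //.
have [-> | neq_yx] := eqVneq y x.
  have cons_x_inj : injective (cons x) by move=> ? ? [].
  rewrite (mem_map cons_x_inj) IH.
  by apply/orP/idP => [[// | /cons_subseq] | ->]; [| left].
by case: (mapP) => // -[t' _ [eq_yx _]]; rewrite eq_yx eqxx in neq_yx.
Qed.

End Subsequences.

(* A strictly increasing list of indices below n is a subsequence of
   [:: 0; ...; n-1]; it is the filter of that list by its own members. *)
Lemma increasing_subseq_iota (F : seq nat) n :
  sorted ltn F -> all (fun i => i < n) F -> subseq F (iota 0 n).
Proof.
move=> sorted_F /allP F_lt_n.
suff -> : F = filter (mem F) (iota 0 n) by apply: filter_subseq.
apply: (irr_sorted_eq ltn_trans ltnn) => //.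
  exact/sorted_filter/iota_ltn_sorted/ltn_trans.
move=> i; rewrite mem_filter mem_iota /=.
by case iF: (i \in F) => //; rewrite F_lt_n.
Qed.

(* An injective map from nat takes, beyond any bound m, a value outside
   any given finite list: among the |W| + 1 indices m+1, ..., m+|W|+1 the
   images are distinct, so they cannot all lie in W. *)
Lemma injective_avoids (T : eqType) (a : nat -> T) (W : seq T) m :
  injective a -> exists k, (m < k) && (a k \notin W).
Proof.
move=> a_inj; set ks := iota m.+1 (size W).+1.
have : ~~ all (mem W) (map a ks).
  apply/negP => /allP images_in_W.
  have := uniq_leq_size _ images_in_W.
  by rewrite map_inj_uniq // iota_uniq size_map size_iota ltnn => /(_ isT).
case/allPn=> _ /mapP [k k_in_ks ->] ak_notin_W; exists k.
by move: k_in_ks; rewrite mem_iota ak_notin_W andbT => /andP [].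
Qed.

Section SubsequenceSums.
Variable G : groupType.

Lemma seq_sum_rcons (b : nat -> G) F x :
  seq_sum b (rcons F x) = seq_sum b F * b x.
Proof.
rewrite /seq_sum; elim: F => [|y F /= ->]; first by rewrite /= mulg1 mul1g.
by rewrite mulgA.
Qed.

Lemma seq_sum_comp (a : nat -> G) (f : nat -> nat) F :
  seq_sum (a \o f) F = seq_sum a (map f F).
Proof. by rewrite /seq_sum foldr_map. Qed.

Definition quotients (b : nat -> G) (s : seq nat) : seq G :=
  [seq (seq_sum b F)^-1 * seq_sum b F' | F <- subseqs s, F' <- subseqs s].

Lemma quotientsP (b : nat -> G) s F F' :
  subseq F s -> subseq F' s -> (seq_sum b F)^-1 * seq_sum b F' \in quotients b s.
Proof.
by rewrite -!mem_subseqs => Fs F's; apply/allpairsP; exists (F, F').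
Qed.

Lemma quotients_comp (a : nat -> G) (f : nat -> nat) s :
  {subset quotients (a \o f) s <= quotients a (map f s)}.
Proof.
move=> q /allpairsP [[F F'] [/=]]; rewrite !mem_subseqs => Fs F's ->.
by rewrite !(seq_sum_comp a f); apply: quotientsP; apply: map_subseq.
Qed.

Lemma proper_of_avoiding (b : nat -> G) :
  (forall x, b x \notin quotients b (iota 0 x)) -> proper_seq b.
Proof.
move=> avoids F1 F2 /andP [_ sorted_F1] /andP [nonempty_F2].
case/lastP: F2 nonempty_F2 => // F2 x _.
rewrite -cats1 (sorted_pairwise ltn_trans) pairwise_cat allrel1r.
move=> /and3P [F2_lt_x pairwise_F2 _] F1_lt_F2 eq_sums.
have F1_lt_x : all (fun i => i < x) F1.
  by apply/allP => i /(allP F1_lt_F2); rewrite all_cat /= andbT => /andP [].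
have sorted_F2 : sorted ltn F2 by rewrite (sorted_pairwise ltn_trans).
have bx_quotient : b x = (seq_sum b F2)^-1 * seq_sum b F1.
  by rewrite eq_sums cats1 seq_sum_rcons mulKg.
move/negP: (avoids x); apply; rewrite bx_quotient.
by apply: quotientsP; apply: increasing_subseq_iota.
Qed.

End SubsequenceSums.

Section GreedyConstruction.
Variables (G : groupType) (a : nat -> G).
Hypothesis a_inj : injective a.

Definition next_index (s : seq nat) : nat :=
  xchoose (injective_avoids (quotients a s) (last 0 s) a_inj).

Lemma next_indexP s :
  last 0 s < next_index s /\ a (next_index s) \notin quotients a s.
Proof.
by have /andP [] := xchooseP (injective_avoids (quotients a s) (last 0 s) a_inj).
Qed.

Fixpoint chosen_prefix (n : nat) : seq nat :=
  if n is n'.+1 then rcons (chosen_prefix n') (next_index (chosen_prefix n'))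
  else [::].

Definition chosen_index (n : nat) : nat := next_index (chosen_prefix n).

Lemma chosen_prefixE n : chosen_prefix n = map chosen_index (iota 0 n).
Proof.
elim: n => [|n IH] //.
by rewrite -[in RHS]addn1 iotaD map_cat -IH add0n cats1.
Qed.

Lemma chosen_index_increasing n : chosen_index n < chosen_index n.+1.
Proof.
have [last_lt _] := next_indexP (chosen_prefix n.+1).
by rewrite /= last_rcons in last_lt.
Qed.

Lemma chosen_index_avoids n :
  a (chosen_index n) \notin quotients (a \o chosen_index) (iota 0 n).
Proof.
have [_ not_quotient] := next_indexP (chosen_prefix n).
rewrite -/(chosen_index n) [in quotients _ _]chosen_prefixE in not_quotient.
exact: contra (@quotients_comp _ a chosen_index _ _) not_quotient.
Qed.

End GreedyConstruction.

Theorem lemma2p2 (G : groupType) (a : nat -> G) :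
  injective a ->
  exists phi : nat -> nat,
    (forall n, phi n < phi n.+1) /\ proper_seq (fun n => a (phi n)).
Proof.
move=> a_inj; exists (chosen_index a_inj); split.
  exact: chosen_index_increasing.
apply: (@proper_of_avoiding _ (a \o chosen_index a_inj)).
exact: chosen_index_avoids.
Qed.
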